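(* Against a non-adaptive adversary, every online algorithm (deterministic or randomized) has competitive ratio $\Omega(\log n)$ with respect to the \textsc{Min-Max} objective, where $n$ is the number of agents.
   Context: An instance $\mathcal{I}=(N,P,T,(\mathbf{D}_i)_{i\in N})$ has agents $N=[n]$, projects $P$, timesteps $T=[\ell]$, and disapproval sets $D_{ik}\subseteq P$. An outcome is $\mathbf{o}\in P^\ell$ and $d_i(\mathbf{o})=|\{k\in T:o_k\in D_{ik}\}|$. An online algorithm chooses each $o_k$ (possibly at random) based only on $(D_{it})_{i\in N,t\in[k]}$. A non-adaptive adversary fixes the (possibly randomly drawn) instance without access to the algorithm's random choices. The competitive ratio of $\mathcal{B}$ with respect to \textsc{Min-Max} is the supremum over instances of the ratio between the (expected) value $\max_i d_i(\mathcal{B}(\mathcal{I}))$ and the optimum $\min_{\mathbf{o}}\max_i d_i(\mathbf{o})$. *)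

From HB Require Import structures.
From mathcomp Require Import all_boot all_order all_algebra.
From mathcomp Require Import reals exp.
Set Implicit Arguments. Unset Strict Implicit. Unset Printing Implicit Defensive.
Import Order.TTheory GRing.Theory Num.Theory.
Local Open Scope ring_scope.

(* Agents N = 'I_n, projects P = 'I_m.+1 (a nonempty finite set), timesteps
   T = 'I_ell. A profile at one timestep: agent i |-> disapproval set D_{ik}. *)
Definition profile (n m : nat) := {ffun 'I_n -> {set 'I_m.+1}}.

Definition instance (n m ell : nat) := {ffun 'I_ell -> profile n m}.

Definition outcome (m ell : nat) := {ffun 'I_ell -> 'I_m.+1}.

Definition disappr n m ell (D : instance n m ell) (o : outcome m ell) (i : 'I_n)
  : nat := #|[set k : 'I_ell | o k \in D k i]|.

Definition maxdis n m ell (D : instance n m ell) (o : outcome m ell) : nat :=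
  \max_(i < n) disappr D o i.

(* OPT = min_o max_i d_i(o)   (ell is an upper bound for every max_i d_i(o)) *)
Definition opt n m ell (D : instance n m ell) : nat :=
  \big[minn/ell]_(o : outcome m ell) maxdis D o.

(* A (possibly randomized) online algorithm for n agents, as a behavioural
   strategy: given the project set (size m.+1), the profiles revealed so far
   (D_{.,1}, ..., D_{.,k}) and its own previous choices (o_1, ..., o_{k-1}),
   it outputs a probability distribution over the choice o_k. *)
Definition online_alg (R : realType) (n : nat) :=
  forall m : nat, seq (profile n m) -> seq 'I_m.+1 -> {ffun 'I_m.+1 -> R}.

Definition valid_alg (R : realType) n (B : online_alg R n) : Prop :=
  forall m (hist : seq (profile n m)) (past : seq 'I_m.+1),
    (forall p, 0 <= B m hist past p) /\ \sum_p B m hist past p = 1.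

Definition prob_outcome (R : realType) n (B : online_alg R n) m ell
  (D : instance n m ell) (o : outcome m ell) : R :=
  \prod_(k : 'I_ell)
     B m (map D (take k.+1 (enum 'I_ell))) (map o (take k (enum 'I_ell))) (o k).

Definition expected_cost (R : realType) n (B : online_alg R n) m ell
  (D : instance n m ell) : R :=
  \sum_(o : outcome m ell) prob_outcome B D o * (maxdis D o)%:R.

(* Two projects suffice.  With h = floor(log2 n), identify agents with binary
   words of length h.  At step k, the agents whose first k bits agree with the
   adversary's word c_0 ... c_(k-1) disapprove the project given by their k-th
   bit, and all other agents disapprove nothing.  Knowing the algorithm's
   distribution (but not its coins), the adversary fixes in advance c_k to be a
   project the algorithm picks at step k with probability at least 1/2, given
   the instance up to step k.  The agent whose word is c then expects at least
   h/2 disapprovals.  On the other hand, always picking the complement of c hurts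
   each agent at most once, since an agent is hurt only at the step where its
   word leaves c, after which it disapproves nothing; and OPT >= 1 because both
   projects are disapproved at step 0.  Hence the ratio is at least
   h/2 >= (ln n)/4. *)

From HB Require Import structures.
From mathcomp Require Import all_boot all_order all_algebra.
From mathcomp Require Import reals exp.
From mathcomp Require Import zify lra.
Import Order.TTheory GRing.Theory Num.Theory.
Set Implicit Arguments. Unset Strict Implicit. Unset Printing Implicit Defensive.

Definition bitn (i l : nat) : bool := odd (i %/ 2 ^ l).

(* Little-endian: the head of the word is the least significant bit. *)
Definition nat_of_bits (c : bitseq) : nat :=
  foldr (fun (b : bool) m => b + m.*2)%N 0%N c.

Lemma bitn_nat_of_bits c l :
  (l < size c)%N -> bitn (nat_of_bits c) l = nth false c l.
Proof.
rewrite /bitn; elim: c l => [|b c IHc] [|l] //= lt_l_c.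
  by rewrite expn0 divn1 oddD odd_double addbF; case: b.
by rewrite expnS divnMA divn2 half_bit_double; apply: IHc.
Qed.

Lemma nat_of_bits_lt c : (nat_of_bits c < 2 ^ size c)%N.
Proof. by elim: c => [|b c IHc] //=; rewrite expnS; case: b => /=; lia. Qed.

Local Open Scope ring_scope.

Definition ffun_cons (T : Type) r (p : T) (o : {ffun 'I_r -> T}) : {ffun 'I_r.+1 -> T} :=
  [ffun i => if unlift ord0 i is Some j then o j else p].

Lemma ffun_cons0 (T : Type) r (p : T) (o : {ffun 'I_r -> T}) : ffun_cons p o ord0 = p.
Proof. by rewrite ffunE unlift_none. Qed.

Lemma ffun_cons_lift (T : Type) r (p : T) (o : {ffun 'I_r -> T}) j :
  ffun_cons p o (lift ord0 j) = o j.
Proof. by rewrite ffunE liftK. Qed.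

Lemma map_ffun_cons_take (T : Type) r (p : T) (o : {ffun 'I_r -> T}) t :
  map (ffun_cons p o) (take t.+1 (enum 'I_r.+1)) = p :: map o (take t (enum 'I_r)).
Proof.
rewrite enum_ordSl /= ffun_cons0 -map_take -map_comp.
by congr cons; apply: eq_map => j /=; rewrite ffun_cons_lift.
Qed.

Lemma map_ffun_cons (T : Type) r (p : T) (o : {ffun 'I_r -> T}) :
  map (ffun_cons p o) (enum 'I_r.+1) = p :: map o (enum 'I_r).
Proof.
rewrite -(take_size (enum 'I_r.+1)) size_enum_ord map_ffun_cons_take.
by rewrite take_oversize ?size_enum_ord.
Qed.

Lemma sum_ffunS (V : nmodType) (T : finType) r (F : {ffun 'I_r.+1 -> T} -> V) :
  \sum_o F o = \sum_p \sum_(o : {ffun 'I_r -> T}) F (ffun_cons p o).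
Proof.
pose uncons (o : {ffun 'I_r.+1 -> T}) := (o ord0, [ffun j => o (lift ord0 j)]).
have consK : cancel (fun q => ffun_cons q.1 q.2) uncons.
  case=> p o; rewrite /uncons ffun_cons0; congr pair.
  by apply/ffunP => j; rewrite ffunE ffun_cons_lift.
have unconsK : cancel uncons (fun q => ffun_cons q.1 q.2).
  move=> o; apply/ffunP => i; rewrite ffunE.
  by case: unliftP => [j|] ->; rewrite ?ffunE.
rewrite (reindex (fun q => ffun_cons q.1 q.2)) /=; last by exists uncons.
by rewrite -(pair_bigA _ (fun p o => F (ffun_cons p o))).
Qed.

Section IteratedExpectation.
Variables (R : pzSemiRingType) (T : finType).

Fixpoint iter_expect (g : seq T -> T -> R) (r : nat) (s : seq T) (F : seq T -> R) : R :=
  if r is r'.+1 then \sum_p g s p * iter_expect g r' (rcons s p) F else F s.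

Lemma iter_expect_addn g a b s F :
  iter_expect g (a + b) s F = iter_expect g a s (fun s' => iter_expect g b s' F).
Proof. by elim: a s => [|a IHa] s //=; apply: eq_bigr => p _; rewrite IHa. Qed.

Lemma iter_expectD g r s F1 F2 :
  iter_expect g r s (fun s' => F1 s' + F2 s') = iter_expect g r s F1 + iter_expect g r s F2.
Proof.
elim: r s => [|r IHr] s //=.
by rewrite -big_split; apply: eq_bigr => p _; rewrite IHr mulrDr.
Qed.

Lemma eq_iter_expect g r s F F' :
  (forall s', size s' = (size s + r)%N -> F s' = F' s') ->
  iter_expect g r s F = iter_expect g r s F'.
Proof.
elim: r s => [|r IHr] s eqF /=; first by rewrite eqF ?addn0.
apply: eq_bigr => p _; congr (_ * _); apply: IHr => s' size_s'.
by rewrite eqF // size_s' size_rcons addSnnS.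
Qed.

Lemma eq_iter_expect_kernel g g' r s F :
  (forall s' p, (size s' < size s + r)%N -> g s' p = g' s' p) ->
  iter_expect g r s F = iter_expect g' r s F.
Proof.
elim: r s => [|r IHr] s eqg //=.
apply: eq_bigr => p _; rewrite eqg ?addnS ?ltnS ?leq_addr //; congr (_ * _).
by apply: IHr => s' q; rewrite size_rcons addSnnS; apply: eqg.
Qed.

Lemma iter_expect_stable g t F :
  (forall s, \sum_p g s p = 1) ->
  (forall s p, (t <= size s)%N -> F (rcons s p) = F s) ->
  forall r s, (t <= size s)%N -> iter_expect g r s F = F s.
Proof.
move=> g_sum1 F_stable; elim=> [|r IHr] s t_le_s //=.
rewrite (eq_bigr (fun p => g s p * F s)); last first.
  by move=> p _; rewrite IHr ?F_stable // size_rcons leqW.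
by rewrite -mulr_suml g_sum1 mul1r.
Qed.

Lemma sum_ffun_iter_expect g F r s :
  \sum_(o : {ffun 'I_r -> T})
     (\prod_(k < r) g (s ++ map o (take k (enum 'I_r))) (o k)) * F (s ++ map o (enum 'I_r))
  = iter_expect g r s F.
Proof.
elim: r s => [|r IHr] s /=.
  rewrite (eq_bigr (fun _ => F s)); last by move=> o _; rewrite big_ord0 mul1r enum_ord0 cats0.
  by rewrite sumr_const card_ffun card_ord expn0 mulr1n.
rewrite sum_ffunS; apply: eq_bigr => p _; rewrite -IHr mulr_sumr.
apply: eq_bigr => o _; rewrite big_ord_recl take0 cats0 ffun_cons0 -mulrA; congr (_ * _).
rewrite map_ffun_cons -cat_rcons.
congr (_ * _); apply: eq_bigr => j _.
by rewrite map_ffun_cons_take ffun_cons_lift -cat_rcons.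
Qed.

End IteratedExpectation.

Section OnlineRun.
Variables (R : realType) (n : nat) (B : online_alg R n).

Definition run_kernel m ell (D : instance n m ell) (s : seq 'I_m.+1) (p : 'I_m.+1) : R :=
  B (map D (take (size s).+1 (enum 'I_ell))) s p.

Lemma expectation_iter_expect m ell (D : instance n m ell) (F : seq 'I_m.+1 -> R) :
  \sum_o prob_outcome B D o * F (map o (enum 'I_ell)) = iter_expect (run_kernel D) ell [::] F.
Proof.
rewrite -sum_ffun_iter_expect; apply: eq_bigr => o _; congr (_ * _).
by apply: eq_bigr => k _; rewrite /run_kernel size_map size_take size_enum_ord ltn_ord.
Qed.

Hypothesis B_valid : valid_alg B.

Lemma run_kernel_sum1 m ell (D : instance n m ell) s : \sum_p run_kernel D s p = 1.
Proof. by case: (B_valid (map D (take (size s).+1 (enum 'I_ell))) s). Qed.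

Lemma prob_outcome_ge0 m ell (D : instance n m ell) o : 0 <= prob_outcome B D o.
Proof.
apply: prodr_ge0 => k _.
by case: (B_valid (map D (take k.+1 (enum 'I_ell))) (map o (take k (enum 'I_ell)))).
Qed.

End OnlineRun.

Section Adversary.
Variables (R : realType) (n : nat) (B : online_alg R n).
Hypothesis B_valid : valid_alg B.

Definition follows (c : bitseq) (k i : nat) : bool :=
  [forall l : 'I_k, bitn i l == nth false c l].

Definition adv_profile (c : bitseq) (k : nat) : profile n 1 :=
  [ffun i : 'I_n => if follows c k i then [set p : 'I_2 | (p : nat) == bitn i k] else set0].

Lemma adv_profile_take c k t : (k <= t)%N -> adv_profile (take t c) k = adv_profile c k.
Proof.
move=> le_kt; apply/ffunP => i; rewrite !ffunE; congr (if _ then _ else _).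
by apply: eq_forallb => l; rewrite nth_take // (leq_trans (ltn_ord l)).
Qed.

Definition adv_kernel (c : bitseq) (s : seq 'I_2) (p : 'I_2) : R :=
  B (map (adv_profile c) (iota 0 (size s).+1)) s p.

Definition chose (k : nat) (b : bool) (s : seq 'I_2) : R := ((nth ord0 s k : nat) == b)%:R.

Definition prob_next (c : bitseq) (b : bool) : R :=
  iter_expect (adv_kernel c) (size c).+1 [::] (chose (size c) b).

Definition adv_bit (c : bitseq) : bool := prob_next c false < 1 / 2.

Definition adv_word (k : nat) : bitseq := iter k (fun c => rcons c (adv_bit c)) [::].

Lemma size_adv_word k : size (adv_word k) = k.
Proof. by elim: k => //= k IHk; rewrite size_rcons IHk. Qed.

Lemma take_adv_word k h : (k <= h)%N -> take k (adv_word h) = adv_word k.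
Proof.
elim: h => [|h IHh]; first by rewrite leqn0 => /eqP ->.
rewrite leq_eqVlt => /orP [/eqP ->|]; first by rewrite take_oversize ?size_adv_word.
by rewrite ltnS => le_kh /=; rewrite -cats1 takel_cat ?size_adv_word // IHh.
Qed.

Lemma nth_adv_word k h : (k < h)%N -> nth false (adv_word h) k = adv_bit (adv_word k).
Proof.
move=> lt_kh; rewrite -(nth_take _ (ltnSn k)) take_adv_word //=.
by rewrite nth_rcons size_adv_word ltnn eqxx.
Qed.

Lemma adv_kernel_sum1 c s : \sum_p adv_kernel c s p = 1.
Proof. by case: (B_valid (map (adv_profile c) (iota 0 (size s).+1)) s). Qed.

Lemma prob_next_adv_bit c : 1 / 2 <= prob_next c (adv_bit c).
Proof.
have prob_next_sum1 : prob_next c false + prob_next c true = 1.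
  rewrite /prob_next -iter_expectD.
  transitivity (iter_expect (adv_kernel c) (size c).+1 [::] (fun=> 1)).
    apply: eq_iter_expect => s _; rewrite /chose.
    by case: (nth ord0 s (size c)) => [[|[|x]] ?] //=; rewrite ?addr0 ?add0r.
  by apply: (@iter_expect_stable _ _ _ 0) => //; apply: adv_kernel_sum1.
by rewrite /adv_bit; case: ltrP => //; lra.
Qed.

Section AdversaryInstance.
Variable h : nat.

Definition adv_instance : instance n 1 h := [ffun k : 'I_h => adv_profile (adv_word h) k].

Lemma map_adv_instance_take t :
  (t <= h)%N -> map adv_instance (take t (enum 'I_h)) = map (adv_profile (adv_word h)) (iota 0 t).
Proof.
move=> le_th; rewrite (eq_map (g := adv_profile (adv_word h) \o val)); last first.
  by move=> k; rewrite ffunE.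
by rewrite map_comp map_take val_enum_ord take_iota (minn_idPl le_th).
Qed.

Lemma marginal_adv_instance k b : (k < h)%N ->
  \sum_(o : outcome 1 h) prob_outcome B adv_instance o * chose k b (map o (enum 'I_h))
  = prob_next (adv_word k) b.
Proof.
move=> lt_kh; rewrite expectation_iter_expect.
set g := run_kernel B adv_instance.
have -> : iter_expect g h [::] (chose k b) = iter_expect g (k.+1 + (h - k.+1)) [::] (chose k b).
  by rewrite subnKC.
rewrite iter_expect_addn.
rewrite (@eq_iter_expect _ _ _ _ _ _ (chose k b)); last first.
  move=> s size_s; apply: (@iter_expect_stable _ _ _ k.+1); rewrite ?size_s //.
    exact: run_kernel_sum1.
  by move=> s' p le_s'; rewrite /chose nth_rcons le_s'.
rewrite /prob_next size_adv_word; apply: eq_iter_expect_kernel => s p /= lt_s.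
rewrite /g /adv_kernel /run_kernel map_adv_instance_take; last by lia.
congr (B _ _ _); apply/eq_in_map => j; rewrite mem_iota => /andP [_ lt_j].
by rewrite -(take_adv_word (ltnW lt_kh)) adv_profile_take //; lia.
Qed.

Hypothesis pow_h_le : (2 ^ h <= n)%N.

Lemma nat_of_adv_word_lt : (nat_of_bits (adv_word h) < n)%N.
Proof. by apply: leq_trans (nat_of_bits_lt _) _; rewrite size_adv_word. Qed.

Let target : 'I_n := Ordinal nat_of_adv_word_lt.

Lemma follows_target k : (k <= h)%N -> follows (adv_word h) k target.
Proof.
move=> le_kh; apply/forallP => l; rewrite bitn_nat_of_bits // size_adv_word.
exact: leq_trans (ltn_ord l) le_kh.
Qed.

Lemma target_disapproves (o : outcome 1 h) k :
  (o k \in adv_instance k target) = ((o k : nat) == nth false (adv_word h) k).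
Proof.
rewrite !ffunE follows_target 1?ltnW // in_set /=.
by rewrite bitn_nat_of_bits ?size_adv_word.
Qed.

Lemma disappr_target (o : outcome 1 h) :
  (disappr adv_instance o target)%:R
  = \sum_(k < h) chose k (nth false (adv_word h) k) (map o (enum 'I_h)) :> R.
Proof.
rewrite /disappr -sum1_card big_mkcond natr_sum; apply: eq_bigr => k _.
rewrite in_set target_disapproves /chose (nth_map k) ?size_enum_ord // nth_ord_enum.
by case: eqP.
Qed.

Lemma expected_cost_adv_instance : h%:R / 2 <= expected_cost B adv_instance.
Proof.
apply: (@le_trans _ _
  (\sum_o prob_outcome B adv_instance o * (disappr adv_instance o target)%:R)); last first.
  apply: ler_sum => o _; rewrite ler_wpM2l ?prob_outcome_ge0 // ler_nat.
  exact: (leq_bigmax target).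
under eq_bigr => o _ do rewrite disappr_target mulr_sumr.
rewrite exchange_big /= -[X in X%:R]card_ord -sumr_const mulr_suml.
apply: ler_sum => k _; rewrite marginal_adv_instance // nth_adv_word //.
exact: prob_next_adv_bit.
Qed.

Definition compl_outcome : outcome 1 h := [ffun k : 'I_h => inord (~~ nth false (adv_word h) k)].

Lemma compl_outcome_disapproved (i : 'I_n) (k : 'I_h) :
  (compl_outcome k \in adv_instance k i)
  = follows (adv_word h) k i && (bitn i k != nth false (adv_word h) k).
Proof.
rewrite !ffunE; case: follows; rewrite ?in_set ?in_set0 // inordK; last by case: nth.
by case: nth; case: bitn.
Qed.

(* An agent disapproving the complement at step [k1] stops following the word. *)
Lemma compl_outcome_disapproved_once (i : 'I_n) (k1 k2 : 'I_h) : (k1 < k2)%N ->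
  compl_outcome k1 \in adv_instance k1 i -> compl_outcome k2 \notin adv_instance k2 i.
Proof.
move=> lt_k12; rewrite !compl_outcome_disapproved => /andP [_ /negbTE bit_k1].
by apply/negP => /andP [/forallP /(_ (Ordinal lt_k12)) /=]; rewrite bit_k1.
Qed.

Lemma opt_adv_instance_le1 : (opt adv_instance <= 1)%N.
Proof.
apply: (@leq_trans (maxdis adv_instance compl_outcome)).
  by rewrite /opt -minEnat; apply: (@bigmin_le _ nat).
apply/bigmax_leqP => i _; apply/card_le1_eqP => k1 k2; rewrite !in_set => dis1 dis2.
case: (ltngtP k1 k2) => [lt_k12|lt_k21|/val_inj //].
- by move: dis2; rewrite (negbTE (compl_outcome_disapproved_once lt_k12 dis1)).
- by move: dis1; rewrite (negbTE (compl_outcome_disapproved_once lt_k21 dis2)).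
Qed.

Hypothesis h_gt0 : (0 < h)%N.

(* At the first step every agent follows the empty prefix, and agents 0 and 1
   disapprove different projects. *)
Lemma opt_adv_instance_gt0 : (0 < opt adv_instance)%N.
Proof.
apply: (big_ind (fun x => 0 < x)%N) => // [x y|o _]; first by rewrite leq_min => -> ->.
have two_le_n : (2 <= n)%N by apply: leq_trans pow_h_le; rewrite -{1}(expn1 2) leq_pexp2l.
pose k0 : 'I_h := Ordinal h_gt0.
pose i : 'I_n := Ordinal (leq_trans (ltn_ord (o k0)) two_le_n).
apply: leq_trans (leq_bigmax i); apply/card_gt0P; exists k0.
rewrite in_set !ffunE /=; have -> : follows (adv_word h) 0 i by apply/forallP => -[].
by rewrite in_set /bitn expn0 divn1; case: (o k0) => [[|[|?]] ?].
Qed.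

End AdversaryInstance.
End Adversary.

Lemma ln_natr_le_trunc_log (R : realType) n :
  (2 <= n)%N -> ln (n%:R : R) <= (trunc_log 2 n).*2%:R.
Proof.
move=> two_le_n; set h := trunc_log 2 n.
have h_gt0 : (0 < h)%N by rewrite trunc_log_gt0.
have ln_pow : ln (n%:R : R) <= ln ((2 : R) ^+ h.+1).
  rewrite ler_ln ?posrE ?exprn_gt0 ?ltr0n 1?ltnW //.
  by rewrite -natrX ler_nat ltnW // trunc_log_ltn.
have ln2_le1 : ln (2 : R) <= 1 by apply: le_ln1Dx; lra.
apply: (le_trans ln_pow); rewrite lnXn // -[_ *+ h.+1]mulr_natr -addn1 -muln2 !natrD natrM.
have : 1 <= h%:R :> R by rewrite ler1n.
nra.
Qed.

Theorem proposition4 (R : realType) :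
  exists c : R, 0 < c /\
  exists n0 : nat, forall n : nat, (n0 <= n)%N ->
  forall B : online_alg R n, valid_alg B ->
  exists (m ell : nat) (D : instance n m ell),
    (0 < opt D)%N /\ c * ln (n%:R : R) * (opt D)%:R <= expected_cost B D.
Proof.
exists (1 / 4); split; first lra.
exists 2%N => n two_le_n B B_valid; set h := trunc_log 2 n.
have h_gt0 : (0 < h)%N by rewrite trunc_log_gt0.
have pow_h_le : (2 ^ h <= n)%N by rewrite trunc_logP // ltnW.
exists 1%N, h, (adv_instance B h); split; first exact: opt_adv_instance_gt0 pow_h_le h_gt0.
have ln_n_ge0 : 0 <= ln (n%:R : R) by rewrite ln_ge0 // ler1n ltnW.
have ln_le := ln_natr_le_trunc_log R two_le_n.
have opt_le1 : (opt (adv_instance B h))%:R <= 1 :> R by rewrite lern1 opt_adv_instance_le1.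
have := expected_cost_adv_instance B_valid pow_h_le.
move: ln_le; rewrite -/h -muln2 natrM; nra.
Qed.
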